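(* Let $X$ and $Y$ be nontrivial real Banach spaces. (a) If $X$ is weakly octahedral, then $X\oplus_1 Y$ is weakly octahedral. (b) If $X$ and $Y$ are weakly octahedral and $1<p\leq\infty$, then $X\oplus_p Y$ is weakly octahedral. (c) If $X\oplus_p Y$ is weakly octahedral, where $1<p\leq\infty$, then $X$ is weakly octahedral.
   Context: For $1\le p<\infty$, $X\oplus_p Y$ is $X\times Y$ with norm $(\|x\|^p+\|y\|^p)^{1/p}$; $X\oplus_\infty Y$ has norm $\max\{\|x\|,\|y\|\}$. A Banach space $Z$ is weakly octahedral if for every finite-dimensional subspace $E$ of $Z$, every $z^*\in B_{Z^*}$, and every $\varepsilon>0$, there is a $w\in S_Z$ (unit sphere) such that $\|z+w\|\geq(1-\varepsilon)(|z^*(z)|+\|w\|)$ for all $z\in E$. *)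

From HB Require Import structures.
From mathcomp Require Import all_boot all_order all_algebra.
From mathcomp Require Import all_classical all_reals all_analysis.
Set Implicit Arguments. Unset Strict Implicit. Unset Printing Implicit Defensive.
Import Order.TTheory GRing.Theory Num.Theory.
Import numFieldNormedType.Exports.
Local Open Scope classical_set_scope.
Local Open Scope ring_scope.

(* Weak octahedrality is stated for a real vector space V equipped with a
   norm function N (so that it applies both to a Banach space with its own
   norm and to X x Y with the p-sum norm). *)

Section WOH.
Variables (R : realType) (V : lmodType R).

Definition linear_functional (f : V -> R) : Prop :=
  forall (a : R) (u v : V), f (a *: u + v) = a * f u + f v.

(* f in the closed unit ball of the dual of (V, N): f linear with
   |f v| <= N v for all v (this is exactly ||f|| <= 1, and implies continuity) *)
Definition dual_ball (N : V -> R) (f : V -> R) : Prop :=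
  linear_functional f /\ forall v : V, `|f v| <= N v.

Definition span_seq (s : seq V) : set V :=
  [set z | exists c : 'I_(size s) -> R, z = \sum_(i < size s) c i *: s`_i].

Definition fin_dim_subspace (E : set V) : Prop := exists s : seq V, E = span_seq s.

Definition weakly_octahedral_wrt (N : V -> R) : Prop :=
  forall E : set V, fin_dim_subspace E ->
  forall f : V -> R, dual_ball N f ->
  forall eps : R, 0 < eps ->
  exists w : V, N w = 1 /\
    forall z, E z -> (1 - eps) * (`|f z| + N w) <= N (z + w).
End WOH.

Definition weakly_octahedral (R : realType) (Z : normedModType R) : Prop :=
  @weakly_octahedral_wrt R Z (fun z => `|z|).

Definition psum_norm (R : realType) (X Y : normedModType R) (p : \bar R)
  (v : X * Y) : R :=
  match p with
  | +oo%E => Num.max `|v.1| `|v.2|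
  | r%:E => powR (powR `|v.1| r + powR `|v.2| r) r^-1
  | -oo%E => 0
  end.

Definition nontrivial (R : realType) (X : normedModType R) : Prop :=
  exists x : X, x != 0.

From HB Require Import structures.
From mathcomp Require Import all_boot all_order all_algebra.
From mathcomp Require Import all_classical all_reals all_analysis.
From mathcomp Require Import ring lra.
Import Order.TTheory GRing.Theory Num.Theory.
Import numFieldNormedType.Exports.
Local Open Scope ring_scope.

(* A functional f of norm at most 1 on X (+)_p Y splits as
   f (x, y) = f (x, 0) + f (0, y), and the norms A, B of the two restrictions
   satisfy s A + t B <= |(s, t)|_p: (A, B) lies in the dual unit ball of the
   p-norm of R^2.
   (a), (b): enlarge (A, B) to a pair (a, B) of dual norm 1 and take a unit
   vector (al, be) with a al + B be = 1.  If u and v are witnesses of weak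
   octahedrality for f (., 0) / a in X and for f (0, .) / B in Y, then
   (al u, be v) is a witness for f.  For p = 1, (u, 0) is already a witness,
   so only X is needed.
   (c): dominate the functional on X by a functional g of norm 1 (given by
   Hahn-Banach when it vanishes) and pick x0 in the unit ball with g x0 close
   to 1.  A witness (u, v) in the sum for z |-> g z.1 and the span of x0 and E
   makes |(y + x + u, v)|_p almost 2 + |g x| for y = x0 or y = -x0.  Since
   |(u, v)|_p = 1 and p > 1, the first coordinate carries almost all of it, so
   u, once normalised, is a witness in X. *)

Section span_seq.
Context {R : realType} {V : lmodType R}.
Implicit Types (s : seq V) (z : V).

Lemma span_seqP {s z} :
  span_seq s z <-> exists c : nat -> R, z = \sum_(i < size s) c i *: s`_i.
Proof.
split=> [[c ->]|[c ->]]; last by exists (fun i => c i).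
exists (fun k => oapp c 0 (insub k)).
by apply: eq_bigr => i _; rewrite valK.
Qed.

Lemma span_seq0 s : span_seq s 0.
Proof. by exists (fun=> 0); rewrite big1 // => i _; rewrite scale0r. Qed.

Lemma span_seqZ {s} a {z} : span_seq s z -> span_seq s (a *: z).
Proof.
move=> /span_seqP [c ->]; apply/span_seqP; exists (fun i => a * c i).
by rewrite scaler_sumr; apply: eq_bigr => i _; rewrite scalerA.
Qed.

Lemma span_seq_cons {s} x a {z} : span_seq s z -> span_seq (x :: s) (a *: x + z).
Proof.
move=> /span_seqP [c ->]; apply/span_seqP.
by exists (fun i => if i is k.+1 then c k else a); rewrite /= big_ord_recl.
Qed.

End span_seq.

Lemma span_seq_map {R : realType} {V W : lmodType R} {g : V -> W} {s z} :
  linear g -> span_seq s z -> span_seq (map g s) (g z).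
Proof.
move=> gl /span_seqP [c ->]; apply/span_seqP; exists c.
pose G : {linear V -> W} := HB.pack g (GRing.isLinear.Build _ _ _ _ g gl).
rewrite -[g _]/(G _) linear_sum size_map; apply: eq_bigr => i _.
by rewrite linearZ (nth_map 0).
Qed.

Section linear_functional.
Context {R : realType} {V : lmodType R} {f : V -> R}.
Hypothesis fl : linear_functional f.

Let F : {scalar V} := HB.pack f (GRing.isLinear.Build _ _ _ _ f fl).

Lemma linear_functional0 : f 0 = 0.
Proof. by rewrite -[f _]/(F _) linear0. Qed.

Lemma linear_functionalD u v : f (u + v) = f u + f v.
Proof. by rewrite -[f _]/(F _) linearD. Qed.

Lemma linear_functionalZ a u : f (a *: u) = a * f u.
Proof. by rewrite -[f _]/(F _) linearZ. Qed.

Lemma linear_functionalN u : f (- u) = - f u.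
Proof. by rewrite -[f _]/(F _) linearN. Qed.

End linear_functional.

Local Open Scope classical_set_scope.

Section norming_functional.
Context {R : realType} {V : normedModType R} {x0 : V}.
Hypothesis x0_neq0 : x0 != 0.

(* The norming value at x0 is only required of nonempty graphs, so that the
   empty chain has an upper bound as well. *)
Definition dominated_graph (G : set (V * R)) : Prop :=
  [/\ (forall x a b, G (x, a) -> G (x, b) -> a = b),
      (forall k x y a b, G (x, a) -> G (y, b) -> G (k *: x + y, k * a + b)),
      (forall x a, G (x, a) -> a <= `|x|) &
      (G !=set0 -> G (x0, `|x0|))].

Lemma dominated_graph_bigcup (F : set (set (V * R))) :
  F `<=` dominated_graph -> total_on F subset ->
  dominated_graph (\bigcup_(G in F) G).
Proof.
move=> FP tot; split.
- move=> x a b [G1 F1 h1] [G2 F2 h2].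
  have [s12|s21] := tot _ _ F1 F2.
  + by have [fn _ _ _] := FP _ F2; apply: fn (s12 _ h1) h2.
  + by have [fn _ _ _] := FP _ F1; apply: fn h1 (s21 _ h2).
- move=> k x y a b [G1 F1 h1] [G2 F2 h2].
  have [s12|s21] := tot _ _ F1 F2.
  + by have [_ ln _ _] := FP _ F2; exists G2 => //; apply: ln (s12 _ h1) h2.
  + by have [_ ln _ _] := FP _ F1; exists G1 => //; apply: ln h1 (s21 _ h2).
- by move=> x a [G1 F1 h1]; have [_ _ dm _] := FP _ F1; apply: dm h1.
- move=> [[y b] [G1 F1 h1]]; have [_ _ _ ne] := FP _ F1.
  by exists G1 => //; apply: ne; exists (y, b).
Qed.

Lemma dominated_graph_line :
  dominated_graph [set p | exists t, p = (t *: x0, t * `|x0|)].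
Proof.
split.
- move=> x a b [t [-> ->]] [t' [e ->]].
  have : (t - t') *: x0 = 0 by rewrite scalerBl e subrr.
  by move/eqP; rewrite scaler_eq0 (negbTE x0_neq0) orbF subr_eq0 => /eqP ->.
- move=> k x y a b [t [-> ->]] [t' [-> ->]]; exists (k * t + t').
  by rewrite scalerDl scalerA mulrDl mulrA.
- move=> x a [t [-> ->]]; rewrite normrZ.
  by apply: ler_wpM2r => //; apply: ler_norm.
- by move=> _; exists 1; rewrite scale1r mul1r.
Qed.

Lemma dominated_graph00 {A} : dominated_graph A -> A (x0, `|x0|) -> A (0, 0).
Proof.
by move=> [_ ln _ _] Ax0; have := ln (-1) _ _ _ _ Ax0 Ax0; rewrite scaleN1r mulN1r !addNr.
Qed.

Lemma dominated_graph_extension_value {A : set (V * R)} (x : V) :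
  dominated_graph A -> A (x0, `|x0|) ->
  exists c, forall y a, A (y, a) -> a - `|y - x| <= c /\ c <= `|y + x| - a.
Proof.
move=> GA Ax0; have A00 := dominated_graph00 GA Ax0.
have [_ ln dm _] := GA.
pose S := [set r | exists y a, A (y, a) /\ r = a - `|y - x|].
have key y a y' a' : A (y, a) -> A (y', a') -> a - `|y - x| <= `|y' + x| - a'.
  move=> h h'; rewrite lerBrDr addrAC lerBlDr.
  have := dm _ _ (ln 1 _ _ _ _ h h'); rewrite scale1r mul1r => le1.
  have e : y + y' = (y - x) + (y' + x) by rewrite addrACA addNr addr0.
  apply: (le_trans le1); rewrite e.
  by apply: (le_trans (ler_normD _ _)); rewrite addrC.
have S0 : S !=set0 by exists (0 - `|0 - x|), 0, 0.
have hS : has_sup S.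
  by split => //; exists (`|0 + x| - 0) => r [y [a [h ->]]]; apply: key h A00.
exists (sup S) => y a h; split; first by apply: sup_upper_bound => //; exists y, a.
by apply: ge_sup => // r [y1 [a1 [h1 ->]]]; apply: key h1 h.
Qed.

Lemma dominated_graph_adjoin {A : set (V * R)} {x : V} (c : R) :
  dominated_graph A -> A (x0, `|x0|) -> ~ (exists a, A (x, a)) ->
  (forall y a, A (y, a) -> a - `|y - x| <= c /\ c <= `|y + x| - a) ->
  dominated_graph [set p | exists y a t, A (y, a) /\ p = (y + t *: x, a + t * c)].
Proof.
move=> GA Ax0 nx cLU; have A00 := dominated_graph00 GA Ax0.
have [fn ln dm _] := GA.
have Asc k y a : A (y, a) -> A (k *: y, k * a).
  by move=> h; have := ln k _ _ _ _ h A00; rewrite !addr0.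
split.
- move=> z a b [y1 [a1 [t1 [h1 [e1 ->]]]]] [y2 [a2 [t2 [h2 [e2 ->]]]]].
  have [tt|tn] := eqVneq t1 t2.
    subst t2; move: e2; rewrite e1 => /addIr ey; subst y2.
    by rewrite (fn _ _ _ h1 h2).
  exfalso; apply: nx.
  have ex : x = (t1 - t2)^-1 *: (y2 - y1).
    apply: (scalerI (a:=t1 - t2)); first by rewrite subr_eq0.
    rewrite scalerA mulfV ?subr_eq0 // scale1r scalerBl.
    by rewrite -[y2](addrK (t2 *: x)) -e2 e1 addrAC [y1 + _]addrC addrK.
  exists ((t1 - t2)^-1 * (a2 - a1)); rewrite ex.
  apply: Asc; have := ln (-1) _ _ _ _ h1 h2.
  by rewrite scaleN1r mulN1r addrC [- a1 + _]addrC.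
- move=> k z w a b [y1 [a1 [t1 [h1 [-> ->]]]]] [y2 [a2 [t2 [h2 [-> ->]]]]].
  exists (k *: y1 + y2), (k * a1 + a2), (k * t1 + t2); split; first by apply: ln.
  congr pair; first by rewrite scalerDr scalerA scalerDl addrACA.
  by rewrite mulrDr mulrA mulrDl addrACA.
- move=> z r [y [a [t [h [-> ->]]]]].
  have [t0|tn] := eqVneq t 0.
    by rewrite t0 scale0r mul0r !addr0; apply: dm h.
  have [tp|tneg] := ltP 0 t.
    have := (cLU _ _ (Asc t^-1 _ _ h)).2.
    rewrite lerBrDr -(ler_pM2l tp) mulrDr mulrA mulfV ?mul1r ?gt_eqF //.
    rewrite -[X in X * `|_|](gtr0_norm tp) -normrZ scalerDr scalerA mulfV ?gt_eqF //.
    by rewrite scale1r addrC.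
  have sp : 0 < - t by rewrite oppr_gt0 lt_neqAle tn.
  have := (cLU _ _ (Asc (- t)^-1 _ _ h)).1.
  rewrite lerBlDr -(ler_pM2l sp) mulrDr mulrA mulfV ?mul1r ?gt_eqF //.
  rewrite -[X in X * `|_|](gtr0_norm sp) -normrZ scalerBr scalerA mulfV ?gt_eqF //.
  rewrite scale1r scaleNr opprK mulNr => hh.
  by rewrite -lerBrDr addrC.
- by move=> _; exists x0, `|x0|, 0; rewrite scale0r mul0r !addr0.
Qed.

Lemma dominated_graph_extend {A : set (V * R)} {x : V} :
  dominated_graph A -> A (x0, `|x0|) -> ~ (exists a, A (x, a)) ->
  exists B, dominated_graph B /\ A `<` B.
Proof.
move=> GA Ax0 nx; have [c cLU] := dominated_graph_extension_value x GA Ax0.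
eexists; split; first exact: dominated_graph_adjoin GA Ax0 nx cLU.
split.
- move=> [y a] h; exists y, a, 0; split => //.
  by rewrite scale0r mul0r !addr0.
- move=> sub; apply: nx; exists c.
  apply: (sub (x, c)); exists 0, 0, 1; split; first exact: dominated_graph00 GA Ax0.
  by rewrite scale1r mul1r !add0r.
Qed.

Lemma exists_norming_functional : exists g : V -> R,
  dual_ball (fun v => `|v|) g /\ g x0 = `|x0|.
Proof.
have [A [GA maxA]] := Zorn_bigcup dominated_graph_bigcup.
have [fn ln dm ne] := GA.
have Ax0 : A (x0, `|x0|).
  apply: ne; apply: contrapT => A0.
  have A_eq0 : A = set0 by apply/seteqP; split => // p Ap; apply: A0; exists p.
  apply: (maxA _ _ dominated_graph_line); rewrite A_eq0; split => // sub.
  by have := sub (1 *: x0, 1 * `|x0|) (ex_intro _ 1 erefl).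
have tot v : exists a, A (v, a).
  apply: contrapT => nv.
  have [B [GB AB]] := dominated_graph_extend GA Ax0 nv.
  exact: maxA _ AB GB.
have [g hg] := choice tot.
exists g; split; [split|exact: fn (hg x0) Ax0].
- by move=> k u v; apply: fn (hg _) _; apply: ln; exact: hg.
- move=> v; rewrite ler_norml; apply/andP; split; last exact: dm (hg v).
  have := dm _ _ (ln (-1) _ _ _ _ (hg v) (dominated_graph00 GA Ax0)).
  by rewrite !addr0 scaleN1r mulN1r normrN lerNl.
Qed.

End norming_functional.

Section dual_norm.
Context {R : realType} {V : normedModType R}.

Definition dual_norm (f : V -> R) : R :=
  sup [set r | exists x : V, `|x| <= 1 /\ r = `|f x|].

Context {f : V -> R}.
Hypothesis fl : linear_functional f.
Hypothesis fb : forall v, `|f v| <= `|v|.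

Let has_sup_dual_norm : has_sup [set r | exists x : V, `|x| <= 1 /\ r = `|f x|].
Proof.
split; first by exists `|f 0|, 0; rewrite normr0.
by exists 1 => r [x [x1 ->]]; apply: le_trans (fb x) x1.
Qed.

Lemma dual_norm_le1 : dual_norm f <= 1.
Proof.
by apply: ge_sup (has_sup_dual_norm).1 _ => r [x [x1 ->]]; apply: le_trans (fb x) x1.
Qed.

Lemma dual_norm_ge0 : 0 <= dual_norm f.
Proof.
by apply: le_trans (sup_upper_bound has_sup_dual_norm _); last by exists 0; rewrite normr0.
Qed.

Lemma ler_dual_norm x : `|f x| <= dual_norm f * `|x|.
Proof.
have [->|x_neq0] := eqVneq x 0.
  by rewrite (linear_functional0 fl) !normr0 mulr0.
have xp : 0 < `|x| by rewrite normr_gt0.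
have h : `|f (`|x|^-1 *: x)| <= dual_norm f.
  apply: sup_upper_bound => //; exists (`|x|^-1 *: x); split => //.
  by rewrite normrZ normfV normr_id mulVf ?gt_eqF.
move: h; rewrite (linear_functionalZ fl) normrM normfV normr_id.
by rewrite ler_pdivrMl // mulrC.
Qed.

Lemma dual_norm_approx {d} : 0 < d -> exists x, `|x| <= 1 /\ dual_norm f - d < f x.
Proof.
move=> d0; have [r [x [x1 ->]] h] := sup_adherent d0 has_sup_dual_norm.
have [fp|fn] := leP 0 (f x); first by exists x; rewrite -(ger0_norm fp).
exists (- x); split; first by rewrite normrN.
by rewrite (linear_functionalN fl) -(ltr0_norm fn).
Qed.

End dual_norm.

Section pnorm2.
Context {R : realType}.
Implicit Types (p : \bar R) (r s t a b c : R).

Definition pnorm2 p s t : R :=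
  match p with
  | +oo%E => Num.max s t
  | r%:E => (s `^ r + t `^ r) `^ r^-1
  | -oo%E => 0
  end.

Lemma psum_normE (X Y : normedModType R) p (v : X * Y) :
  psum_norm p v = pnorm2 p `|v.1| `|v.2|.
Proof. by case: p. Qed.

Let powR_le {r s t} : 0 <= r -> 0 <= s -> s <= t -> s `^ r <= t `^ r.
Proof. by move=> r0 s0 st; apply: ge0_ler_powR; rewrite // nnegrE (le_trans s0). Qed.

Let powRK r s : 0 <= s -> 0 < r -> (s `^ r) `^ r^-1 = s.
Proof. by move=> s0 r0; rewrite -powRrM mulfV ?gt_eqF // powRr1. Qed.

Let powRVK r s : 0 <= s -> 0 < r -> (s `^ r^-1) `^ r = s.
Proof. by move=> s0 r0; rewrite -powRrM mulVf ?gt_eqF // powRr1. Qed.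

Let powR1r r : 1 `^ r = 1.
Proof. by rewrite powR1. Qed.

Let conjugate_exponent_inv {r} : 1 < r -> r^-1 + (r / (r - 1))^-1 = 1.
Proof.
move=> r1; have rn0 : r != 0 by lra.
have r10 : r - 1 != 0 by lra.
by field; apply/andP.
Qed.

Let conjugate_exponent_mul {r} : 1 < r -> (r / (r - 1))^-1 * r = r - 1.
Proof.
move=> r1; have rn0 : r != 0 by lra.
have r10 : r - 1 != 0 by lra.
by field; apply/andP.
Qed.

Let conjugate_exponent_gt1 {r} : 1 < r -> 1 < r / (r - 1).
Proof. by move=> r1; rewrite ltr_pdivlMr ?mul1r ?gtrBl ?subr_gt0. Qed.

Let conjugate_exponent_sub1 {r} : 1 < r -> (r / (r - 1) - 1) * r = r / (r - 1).
Proof. by move=> r1; field; rewrite subr_eq0 gt_eqF. Qed.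

Lemma pnorm2E r s t : pnorm2 r%:E s t = (s `^ r + t `^ r) `^ r^-1.
Proof. by []. Qed.

Lemma pnorm2_infty s t : pnorm2 +oo%E s t = Num.max s t.
Proof. by []. Qed.

Lemma pnorm2_pow r s t : 0 < r -> pnorm2 r%:E s t `^ r = s `^ r + t `^ r.
Proof. by move=> r0; rewrite powRVK // addr_ge0 // powR_ge0. Qed.

Lemma pnorm2_1 s t : 0 <= s -> 0 <= t -> pnorm2 1%:E s t = s + t.
Proof. by move=> s0 t0; rewrite pnorm2E invr1 !powRr1 // addr_ge0. Qed.

Lemma pnorm2_ge0 p s t : 0 <= s -> 0 <= pnorm2 p s t.
Proof.
case: p => [r||] // s0; first exact: powR_ge0.
by rewrite pnorm2_infty le_max s0.
Qed.

Lemma pnorm2s0 {p s} : (1 <= p)%E -> 0 <= s -> pnorm2 p s 0 = s.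
Proof.
case: p => [r||] //; last by move=> _ s0; rewrite pnorm2_infty max_l.
rewrite lee_fin => r1 s0; have r0 : 0 < r by apply: lt_le_trans r1.
by rewrite pnorm2E powR0 ?gt_eqF // addr0 powRK.
Qed.

Lemma pnorm20s {p t} : (1 <= p)%E -> 0 <= t -> pnorm2 p 0 t = t.
Proof.
case: p => [r||] //; last by move=> _ t0; rewrite pnorm2_infty max_r.
rewrite lee_fin => r1 t0; have r0 : 0 < r by apply: lt_le_trans r1.
by rewrite pnorm2E powR0 ?gt_eqF // add0r powRK.
Qed.

Lemma ler_pnorm2 {p s t s' t'} : (1 <= p)%E -> 0 <= s -> 0 <= t ->
  s <= s' -> t <= t' -> pnorm2 p s t <= pnorm2 p s' t'.
Proof.
case: p => [r||]; last 2 first.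
- by move=> _ _ _ ss tt; rewrite !pnorm2_infty ge_max !le_max ss tt orbT.
- by rewrite leeNy_eq.
rewrite lee_fin => r1 s0 t0 ss tt; have r0 : 0 < r by apply: lt_le_trans r1.
rewrite !pnorm2E; apply: powR_le; first by rewrite invr_ge0 ltW.
  by rewrite addr_ge0 // powR_ge0.
by apply: lerD; apply: powR_le => //; apply: ltW.
Qed.

Lemma pnorm2M {p c s t} : (1 <= p)%E -> 0 <= c -> 0 <= s -> 0 <= t ->
  pnorm2 p (c * s) (c * t) = c * pnorm2 p s t.
Proof.
case: p => [r||] //; last by move=> _ c0 _ _; rewrite !pnorm2_infty maxr_pMr.
rewrite lee_fin => r1 c0 s0 t0; have r0 : 0 < r by apply: lt_le_trans r1.
rewrite !pnorm2E !powRM // -mulrDr powRM ?powRK ?powR_ge0 //.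
by rewrite addr_ge0 // powR_ge0.
Qed.

Lemma pnorm2_ge_l {p s t} : (1 <= p)%E -> 0 <= s -> 0 <= t -> s <= pnorm2 p s t.
Proof. by move=> p1 s0 t0; rewrite -{1}(pnorm2s0 p1 s0) ler_pnorm2. Qed.

Lemma pnorm2_ge_r {p s t} : (1 <= p)%E -> 0 <= s -> 0 <= t -> t <= pnorm2 p s t.
Proof. by move=> p1 s0 t0; rewrite -{1}(pnorm20s p1 t0) ler_pnorm2. Qed.

(* [s ^ r = s * s ^ (r - 1) <= s * (s + t) ^ (r - 1)], and symmetrically for t *)
Lemma pnorm2_le_add {p s t} : (1 <= p)%E -> 0 <= s -> 0 <= t ->
  pnorm2 p s t <= s + t.
Proof.
case: p => [r||] //; last first.
  by move=> _ s0 t0; rewrite pnorm2_infty ge_max lerDl lerDr s0 t0.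
rewrite lee_fin => r1 s0 t0; have r0 : 0 < r by apply: lt_le_trans r1.
have st0 : 0 <= s + t by rewrite addr_ge0.
have pow_le x : 0 <= x -> x <= s + t -> x `^ r <= x * (s + t) `^ (r - 1).
  move=> x0 xst; rewrite -mulr_powRB1 // ler_wpM2l //.
  by apply: powR_le => //; rewrite subr_ge0.
rewrite pnorm2E -[leRHS](powRK r (s + t) st0 r0); apply: powR_le.
- by rewrite invr_ge0 ltW.
- by rewrite addr_ge0 // powR_ge0.
rewrite -[(s + t) `^ r]mulr_powRB1 // mulrDl.
by apply: lerD; apply: pow_le; rewrite // ?lerDl ?lerDr.
Qed.

Lemma pnorm2_hoelder {r s t a b} : 1 < r -> 0 <= s -> 0 <= t -> 0 <= a -> 0 <= b ->
  a * s + b * t <= pnorm2 r%:E s t * pnorm2 (r / (r - 1))%:E a b.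
Proof.
move=> r1 s0 t0 a0 b0; have r0 : 0 < r by apply: lt_trans r1.
rewrite [a * s]mulrC [b * t]mulrC; apply: hoelder2 => //.
- by apply: divr_gt0; rewrite // subr_gt0.
- exact: conjugate_exponent_inv.
Qed.

Lemma powR_addr_le {r s t} : 1 < r -> 0 <= s -> 0 <= t ->
  (s + t) `^ r <= 2 `^ (r - 1) * (s `^ r + t `^ r).
Proof.
move=> r1 s0 t0; have r0 : 0 < r by apply: lt_trans r1.
set q := r / (r - 1).
have h := pnorm2_hoelder r1 s0 t0 ler01 ler01; rewrite !mul1r in h.
have Q2 : pnorm2 q%:E 1 1 = 2 `^ q^-1.
  by rewrite pnorm2E !powR1r.
have e : (pnorm2 r%:E s t * pnorm2 q%:E 1 1) `^ r = 2 `^ (r - 1) * (s `^ r + t `^ r).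
  rewrite powRM ?pnorm2_ge0 //.
  rewrite [X in X * _](pnorm2_pow _ _ _ r0) [in X in _ * X]Q2.
  by rewrite -[X in _ * X]powRrM conjugate_exponent_mul // mulrC.
by rewrite -e; apply: powR_le h; [apply: ltW | apply: addr_ge0].
Qed.

(* Bernoulli's inequality, through the integer exponent [n = floor r + 1]. *)
Lemma bernoulli_le_powR {y r} : 0 <= y <= 1 -> 1 <= r ->
  1 - (Num.truncn r).+1%:R * (1 - y) <= y `^ r.
Proof.
move=> /andP[y0 y1] r1; set n := (Num.truncn r).+1.
have bern_nat m : 1 - m%:R * (1 - y) <= y ^+ m.
  elim: m => [|m IH]; first by rewrite mul0r subr0 expr0.
  have ym1 : y ^+ m <= 1 by apply: exprn_ile1.
  have h : (1 - y) * y ^+ m <= 1 - y by rewrite ler_piMr //; lra.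
  have e : y ^+ m.+1 = y ^+ m - (1 - y) * y ^+ m by rewrite exprS; ring.
  by rewrite e -natr1; lra.
apply: le_trans (bern_nat n) _; rewrite -powR_mulrn //.
have [->|y_neq0] := eqVneq y 0.
  by rewrite !powR0 ?gt_eqF // ?ltr0n //; apply: lt_le_trans r1.
apply: ger_powR; first by rewrite lt_neqAle eq_sym y_neq0 y0 y1.
exact/ltW/truncnS_gt.
Qed.

Lemma pnorm2_dual_sum_le1 {r} {A B : R} : 1 < r -> 0 <= A -> 0 <= B ->
  (forall s t, 0 <= s -> 0 <= t -> s * A + t * B <= pnorm2 r%:E s t) ->
  A `^ (r / (r - 1)) + B `^ (r / (r - 1)) <= 1.
Proof.
move=> r1 A0 B0 dual; have r0 : 0 < r by apply: lt_trans r1.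
have q1 := conjugate_exponent_gt1 r1.
have qr := conjugate_exponent_sub1 r1.
set q := r / (r - 1) in q1 qr *; have q0 : 0 < q by apply: lt_trans q1.
have := dual (A `^ (q - 1)) (B `^ (q - 1)) (powR_ge0 _ _) (powR_ge0 _ _).
rewrite [_ * A]mulrC [_ * B]mulrC !mulr_powRB1 // pnorm2E -!powRrM qr.
set S := _ + _ => le_S; have S0 : 0 <= S by rewrite addr_ge0 // powR_ge0.
rewrite leNgt; apply/negP => S_gt1.
have : S `^ r <= S by rewrite -[leRHS](powRVK r S) //; apply: powR_le le_S => //; exact: ltW.
rewrite -mulr_powRB1 // -[leRHS]mulr1 ler_pM2l; last by apply: lt_trans S_gt1.
apply/negP; rewrite -ltNge.
have r1_pos : 0 < r - 1 by rewrite subr_gt0.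
by have := @gt0_ltr_powR _ (r - 1) r1_pos 1 S; rewrite powR1r; apply; rewrite ?nnegrE.
Qed.

Definition norming_pair p (a b al be : R) : Prop :=
  [/\ 0 <= al /\ 0 <= be, pnorm2 p al be = 1, a * al + b * be = 1 &
      forall s t, 0 <= s -> 0 <= t -> a * s + b * t <= pnorm2 p s t].

Lemma pnorm2_norming_pair {p} {A B : R} : (1 < p)%E -> 0 <= A -> 0 <= B ->
  (forall s t, 0 <= s -> 0 <= t -> s * A + t * B <= pnorm2 p s t) ->
  exists a al be, A <= a /\ norming_pair p a B al be.
Proof.
case: p => [r||]; last by rewrite ltNge leNye.
- rewrite lte_fin => r1 A0 B0 dual; have r0 : 0 < r by apply: lt_trans r1.
  have SL := pnorm2_dual_sum_le1 r1 A0 B0 dual.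
  have q1 := conjugate_exponent_gt1 r1; have qr := conjugate_exponent_sub1 r1.
  set q := r / (r - 1) in SL q1 qr *; have q0 : 0 < q by apply: lt_trans q1.
  have Aq0 : 0 <= A `^ q := powR_ge0 _ _.
  have Bq1 : 0 <= 1 - B `^ q by rewrite subr_ge0 (le_trans _ SL) // lerDr.
  set a := (1 - B `^ q) `^ q^-1; have a0 : 0 <= a := powR_ge0 _ _.
  have aq : a `^ q = 1 - B `^ q by rewrite powRVK.
  have sum1 : a `^ q + B `^ q = 1 by rewrite aq subrK.
  exists a, (a `^ (q - 1)), (B `^ (q - 1)); split; last split.
  + rewrite -(powRK q A) //; apply: powR_le => //; first by rewrite invr_ge0 ltW.
    by rewrite lerBrDr.
  + by split; apply: powR_ge0.
  + by rewrite pnorm2E -[(a `^ _) `^ r]powRrM -[(B `^ _) `^ r]powRrM qr sum1 powR1.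
  + by rewrite !mulr_powRB1.
  + move=> s t s0 t0; have := pnorm2_hoelder r1 s0 t0 a0 B0.
    by rewrite [pnorm2 q%:E a B]pnorm2E sum1 powR1 mulr1.
- move=> _ A0 B0 dual.
  have := dual 1 1 ler01 ler01; rewrite pnorm2_infty maxxx !mul1r => AB1.
  have := dual 0 1 (lexx 0) ler01; rewrite pnorm2_infty max_r // mul0r add0r mul1r => B1.
  exists (1 - B), 1, 1; split; last split => //.
  + by rewrite lerBrDr.
  + by rewrite pnorm2_infty maxxx.
  + by rewrite !mulr1 subrK.
  + move=> s t s0 t0; rewrite pnorm2_infty.
    have le_s : s <= Num.max s t by rewrite le_max lexx.
    have le_t : t <= Num.max s t by rewrite le_max lexx orbT.
    nra.
Qed.

Let small_theta_facts {th : R} : 0 < th -> th <= 12^-1 ->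
  [/\ 0 <= 1 - 2 * th <= 1, 2 * (1 - 2 * th) <= (1 - th) * (2 - th),
     0 <= (1 - th) * (2 - th) & 1 < (1 - th) * (2 - th)].
Proof. by move=> th0 th12; split; [apply/andP; split | | |]; nra. Qed.

Let small_second_arith (P B T N th L : R) : 1 < P ->
  2 * P * (1 - 2 * N * th) <= L -> L <= P * (2 - B) + B ->
  4 * P * N * th <= (P - 1) * T -> B <= T.
Proof.
move=> P1 lowL upL thT; have P10 : 0 < P - 1 by rewrite subr_gt0.
by rewrite -(ler_pM2l P10); lra.
Qed.

(* A quantitative form of the uniform convexity of the r-norm on R^2. *)
Lemma pnorm2_small_second {r tau : R} : 1 < r -> 0 < tau ->
  exists2 th0, 0 < th0 & forall th a b c, 0 < th <= th0 ->
    0 <= a -> 0 <= b -> 0 <= c -> pnorm2 r%:E a b = 1 -> c <= 1 + a ->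
    (1 - th) * (2 - th) <= pnorm2 r%:E c b -> b <= tau.
Proof.
move=> r1 tau0; have r0 : 0 < r by apply: lt_trans r1.
set n : R := (Num.truncn r).+1%:R; have n0 : 0 < n by rewrite ltr0n.
set P := 2 `^ (r - 1).
have P1 : 1 < P.
  have := @gt0_ltr_powR _ (r - 1) _ 1 2; rewrite powR1; apply; rewrite ?nnegrE //.
    by rewrite subr_gt0.
  by rewrite ltr1n.
have P0 : 0 < P by apply: lt_trans P1.
have two_r : 2 `^ r = 2 * P by rewrite mulr_powRB1.
have T0 : 0 < tau `^ r := powR_gt0 _ tau0.
exists (Num.min (12^-1) ((P - 1) * tau `^ r / (4 * P * n))).
  by rewrite lt_min invr_gt0 ltr0n /= divr_gt0 ?mulr_gt0 // subr_gt0.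
move=> th a b c /andP[th0]; rewrite le_min => /andP[th12 thT] a0 b0 c0 ab1 ca K.
rewrite ler_pdivlMr ?mulr_gt0 // mulrC in thT.
have [y01 K0 K00 _] := small_theta_facts th0 th12.
have lowK : 2 `^ r * (1 - 2 * n * th) <= ((1 - th) * (2 - th)) `^ r.
  apply: le_trans (powR_le (ltW r0) _ K0); last by rewrite mulr_ge0 //; case/andP: y01.
  rewrite powRM //; last by case/andP: y01.
  rewrite ler_wpM2l ?powR_ge0 //; apply: le_trans _ (bernoulli_le_powR y01 (ltW r1)).
  by rewrite -/n lerD2l lerN2 opprB addrC subrK mulrA [n * 2]mulrC.
have ar : a `^ r = 1 - b `^ r.
  by rewrite -(powR1r r) -ab1 pnorm2_pow // addrK.
have upK : ((1 - th) * (2 - th)) `^ r <= P * (2 - b `^ r) + b `^ r.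
  apply: le_trans (powR_le (ltW r0) K00 K) _.
  rewrite pnorm2_pow // lerD2r.
  apply: le_trans (powR_le (ltW r0) c0 ca) _.
  apply: le_trans (powR_addr_le r1 ler01 a0) _.
  by rewrite powR1r ar addrA.
have bT : b `^ r <= tau `^ r.
  by apply: small_second_arith P1 _ upK thT; rewrite -two_r.
rewrite leNgt; apply/negP => tau_b.
have := @gt0_ltr_powR _ r r0 tau b; rewrite !nnegrE => /(_ (ltW tau0) b0 tau_b).
by rewrite ltNge bT.
Qed.

Lemma pnorm2_first_large {p} {tau : R} : (1 < p)%E -> 0 < tau ->
  exists2 th0, 0 < th0 & forall th a b c' c K, 0 < th <= th0 ->
    0 <= a -> 0 <= b -> 0 <= c' -> 0 <= c -> pnorm2 p a b = 1 -> c' <= 1 + a ->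
    (1 - th) * (2 - th) <= pnorm2 p c' b ->
    (1 - th) * (2 - th) <= K -> K <= pnorm2 p c b -> K - tau <= c.
Proof.
case: p => [r||]; last by rewrite ltNge leNye.
- rewrite lte_fin => r1 tau0; have [th0 th00 small] := pnorm2_small_second r1 tau0.
  exists th0 => // th a b c' c K th_le a0 b0 c'0 c0 ab1 c'a Kc' _ Kc.
  have bt := small _ _ _ _ th_le a0 b0 c'0 ab1 c'a Kc'.
  rewrite lerBlDr (le_trans Kc) // (le_trans (pnorm2_le_add _ c0 b0)) ?lerD2l //.
  by rewrite lee_fin ltW.
- move=> _ tau0; exists 12^-1 => // th a b c' c K /andP[th0 th12] a0 b0 _ c0 ab1 _ _ K1 Kc.
  have b1 : b <= 1 by rewrite -ab1 pnorm2_ge_r ?leey.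
  have [_ _ _ K1'] := small_theta_facts th0 th12.
  have {}K1 : 1 < K by apply: lt_le_trans K1' K1.
  move: Kc; rewrite pnorm2_infty le_max => /orP[Kc|Kb].
    by rewrite lerBlDr (le_trans Kc) // lerDl ltW.
  by have := lt_le_trans (le_lt_trans b1 K1) Kb; rewrite ltxx.
Qed.

End pnorm2.

Section weakly_octahedral.
Context {R : realType}.

Lemma weakly_octahedral_wrt_small (V : lmodType R) (N : V -> R) :
  (forall v, 0 <= N v) ->
  (forall s f, dual_ball N f -> forall eps : R, 0 < eps < 1 ->
    exists w, N w = 1 /\
      forall z, span_seq s z -> (1 - eps) * (`|f z| + N w) <= N (z + w)) ->
  weakly_octahedral_wrt N.
Proof.
move=> N0 woh _ [s ->] f fb eps eps0.
set e := Num.min eps 2^-1.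
have e_eps : e <= eps by rewrite ge_min lexx.
have e01 : 0 < e < 1.
  by rewrite lt_min eps0 invr_gt0 ltr0n /= gt_min invf_lt1 ?ltr1n ?ltr0n ?orbT.
have [w [w1 hw]] := woh s f fb e e01.
exists w; split => // z sz; apply: le_trans (hw z sz).
by rewrite ler_wpM2r ?addr_ge0 // lerD2l lerN2.
Qed.

Lemma dual_ball_normalize {V : normedModType R} {f : V -> R} {a : R} :
  linear_functional f -> 0 <= a -> (forall v, `|f v| <= a * `|v|) ->
  dual_ball (fun v => `|v|) (fun v => a^-1 * f v) /\
  forall v, a * `|a^-1 * f v| = `|f v|.
Proof.
move=> fl a0 fa; have [a_eq0|a_neq0] := eqVneq a 0.
  subst a.
  split; first by split => [k u v|v]; rewrite invr0 !mul0r ?mulr0 ?addr0 ?normr0.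
  by move=> v; have := fa v; rewrite !mul0r normr_le0 => /eqP ->; rewrite normr0.
have ap : 0 < a by rewrite lt_neqAle eq_sym a_neq0.
have aK v : a * `|a^-1 * f v| = `|f v|.
  by rewrite normrM normfV (ger0_norm a0) mulrA mulfV // mul1r.
split => //; split => [k u v|v]; first by rewrite fl mulrDr mulrCA.
by rewrite -(ler_pM2l ap) aK.
Qed.

Lemma woh_witness_scale {V : normedModType R} {s : seq V} {g : V -> R} {u : V}
    {eps al : R} :
  dual_ball (fun v => `|v|) g -> 0 <= eps <= 1 -> 0 <= al ->
  (forall x, span_seq s x -> (1 - eps) * (`|g x| + 1) <= `|x + u|) ->
  forall x, span_seq s x -> (1 - eps) * (`|g x| + al) <= `|x + al *: u|.
Proof.
move=> [gl gb] /andP[e0 e1] al0 hu x sx.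
have [->|al_neq0] := eqVneq al 0.
  rewrite scale0r !addr0; have := gb x; have := normr_ge0 (g x); nra.
have alp : 0 < al by rewrite lt_neqAle eq_sym al_neq0.
have := hu _ (span_seqZ al^-1 sx); rewrite linear_functionalZ // normrM normfV.
rewrite (gtr0_norm alp) => h.
have -> : x + al *: u = al *: (al^-1 *: x + u).
  by rewrite scalerDr scalerA mulfV // scale1r.
rewrite normrZ (gtr0_norm alp).
have -> : (1 - eps) * (`|g x| + al) = al * ((1 - eps) * (al^-1 * `|g x| + 1)).
  by field.
by rewrite ler_pM2l.
Qed.

End weakly_octahedral.

Section psum.
Context {R : realType} {X Y : normedModType R}.
Implicit Types (p : \bar R) (f : X * Y -> R).

Lemma linear_fst : linear (@fst X Y). Proof. by []. Qed.

Lemma linear_snd : linear (@snd X Y). Proof. by []. Qed.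

Lemma linear_pairl : linear (fun x : X => ((x, 0) : X * Y)).
Proof. by move=> a u v; congr pair; rewrite /= scaler0 addr0. Qed.

Lemma linear_functional_splitE {f} z : linear_functional f -> f z = f (z.1, 0) + f (0, z.2).
Proof.
move=> fl; rewrite -linear_functionalD //; congr f.
by case: z => x y; congr pair; rewrite /= ?addr0 ?add0r.
Qed.

Lemma linear_functional_pairl {f} :
  linear_functional f -> linear_functional (fun x : X => f (x, 0)).
Proof. by move=> fl a u v; rewrite linear_pairl fl. Qed.

Lemma linear_functional_pairr {f} :
  linear_functional f -> linear_functional (fun y : Y => f (0, y)).
Proof.
move=> fl a u v; have -> : ((0, a *: u + v) : X * Y) = a *: (0, u) + (0, v).
  by congr pair; rewrite /= scaler0 addr0.
by rewrite fl.
Qed.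

Lemma dual_ball_restrict {p f} : (1 <= p)%E -> dual_ball (@psum_norm R X Y p) f ->
  dual_ball (fun x => `|x|) (fun x : X => f (x, 0)) /\
  dual_ball (fun y => `|y|) (fun y : Y => f (0, y)).
Proof.
move=> p1 [fl fb]; split; split.
- exact: linear_functional_pairl.
- by move=> x; have := fb (x, 0); rewrite psum_normE /= normr0 pnorm2s0.
- exact: linear_functional_pairr.
- by move=> y; have := fb (0, y); rewrite psum_normE /= normr0 pnorm20s.
Qed.

Lemma dual_ball_restrict_norms {p f} : (1 <= p)%E -> dual_ball (@psum_norm R X Y p) f ->
  exists A B : R, [/\ 0 <= A, 0 <= B,
    forall x, `|f (x, 0)| <= A * `|x|, forall y, `|f (0, y)| <= B * `|y| &
    forall s t, 0 <= s -> 0 <= t -> s * A + t * B <= pnorm2 p s t].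
Proof.
move=> p1 fball; have [[fxl fxb] [fyl fyb]] := dual_ball_restrict p1 fball.
have [fl fb] := fball.
exists (dual_norm (fun x : X => f (x, 0))), (dual_norm (fun y : Y => f (0, y))).
split; [exact: dual_norm_ge0 fxb | exact: dual_norm_ge0 fyb
  | exact: ler_dual_norm fxl fxb | exact: ler_dual_norm fyl fyb |].
move=> s t s0 t0; apply/ler_addgt0Pr => e e0.
have st1 : 0 < s + t + 1 by rewrite ltr_wpDl // addr_ge0.
pose d := e / (s + t + 1); have d0 : 0 < d by rewrite divr_gt0.
have [x [x1 hx]] := dual_norm_approx fxl fxb d0.
have [y [y1 hy]] := dual_norm_approx fyl fyb d0.
have key : s * f (x, 0) + t * f (0, y) <= pnorm2 p s t.
  rewrite -!(linear_functionalZ fl) -(linear_functionalD fl).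
  rewrite (_ : _ + _ = (s *: x, t *: y)); last first.
    by congr pair; rewrite /= ?scaler0 ?addr0 ?add0r.
  apply: le_trans (ler_norm _) _; apply: le_trans (fb _) _.
  rewrite psum_normE /= !normrZ !ger0_norm //.
  by apply: ler_pnorm2; rewrite ?mulr_ge0 // ler_piMr.
have sd : (s + t) * d <= e.
  by rewrite /d mulrA ler_pdivrMr // mulrC ler_pM2l // lerDl.
move: hx hy; set A := dual_norm _; set B := dual_norm _ => hx hy.
have hA : s * A <= s * f (x, 0) + s * d.
  by rewrite -mulrDr ler_wpM2l // ltW // -ltrBlDr.
have hB : t * B <= t * f (0, y) + t * d.
  by rewrite -mulrDr ler_wpM2l // ltW // -ltrBlDr.
rewrite mulrDl in sd; lra.
Qed.

Lemma weakly_octahedral_psum1 :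
  weakly_octahedral X -> weakly_octahedral_wrt (@psum_norm R X Y 1%:E).
Proof.
move=> hX; apply: weakly_octahedral_wrt_small => [v|s f fball eps /andP[e0 e1]].
  by rewrite psum_normE pnorm2_ge0.
have N1 (v : X * Y) : psum_norm 1%:E v = `|v.1| + `|v.2| by rewrite psum_normE pnorm2_1.
have [fxball [_ fyb]] := dual_ball_restrict (lexx _) fball.
have [u [u1 hu]] := hX _ (ex_intro _ (map fst s) erefl) _ fxball eps e0.
exists (u, 0); split; first by rewrite N1 /= u1 normr0 addr0.
move=> z sz; rewrite !N1 /= u1 normr0 !addr0.
have := hu z.1 (span_seq_map linear_fst sz); rewrite u1 => hz.
have fz : `|f z| <= `|f (z.1, 0)| + `|z.2|.
  rewrite (linear_functional_splitE _ fball.1).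
  by apply: le_trans (ler_normD _ _) _; rewrite lerD2l.
have n2 := normr_ge0 z.2; have n1 := normr_ge0 (f (z.1, 0)).
nra.
Qed.

Lemma psum_woh_witness p f s (a b al be eps : R) :
  (1 <= p)%E -> weakly_octahedral X -> weakly_octahedral Y ->
  linear_functional f -> 0 <= a -> 0 <= b ->
  (forall x, `|f (x, 0)| <= a * `|x|) -> (forall y, `|f (0, y)| <= b * `|y|) ->
  norming_pair p a b al be -> 0 < eps < 1 ->
  exists w, psum_norm p w = 1 /\ forall z, span_seq s z ->
    (1 - eps) * (`|f z| + psum_norm p w) <= psum_norm p (z + w).
Proof.
move=> p1 hX hY fl a0 b0 fa fb [[al0 be0] albe1 ab1 dual] /andP[e0 e1].
have [gball ga] := dual_ball_normalize (linear_functional_pairl fl) a0 fa.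
have [hball hb] := dual_ball_normalize (linear_functional_pairr fl) b0 fb.
have [u [u1 hu]] := hX _ (ex_intro _ (map fst s) erefl) _ gball eps e0.
have [v [v1 hv]] := hY _ (ex_intro _ (map snd s) erefl) _ hball eps e0.
rewrite u1 in hu; rewrite v1 in hv.
have e01 : 0 <= eps <= 1 by rewrite !ltW.
have hu' := woh_witness_scale gball e01 al0 hu.
have hv' := woh_witness_scale hball e01 be0 hv.
exists (al *: u, be *: v).
have Nw : psum_norm p (al *: u, be *: v) = 1.
  by rewrite psum_normE /= !normrZ u1 v1 !mulr1 !ger0_norm.
split => // z sz; rewrite Nw psum_normE /=.
set G := `|a^-1 * f (z.1, 0)|; set H := `|b^-1 * f (0, z.2)|.
have G0 : 0 <= G := normr_ge0 _; have H0 : 0 <= H := normr_ge0 _.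
have eps1 : 0 <= 1 - eps by rewrite subr_ge0 ltW.
have Gal : 0 <= G + al by rewrite addr_ge0.
have Hbe : 0 <= H + be by rewrite addr_ge0.
apply: le_trans (ler_pnorm2 p1 (mulr_ge0 eps1 Gal) (mulr_ge0 eps1 Hbe)
  (hu' _ (span_seq_map linear_fst sz)) (hv' _ (span_seq_map linear_snd sz))).
rewrite pnorm2M // ler_wpM2l //; apply: le_trans (dual _ _ Gal Hbe).
have fz : `|f z| <= a * G + b * H.
  by rewrite ga hb (linear_functional_splitE _ fl) ler_normD.
by rewrite mulrDr [b * (_ + _)]mulrDr addrACA ab1 lerD2r.
Qed.

Lemma weakly_octahedral_psum p : (1 < p)%E ->
  weakly_octahedral X -> weakly_octahedral Y ->
  weakly_octahedral_wrt (@psum_norm R X Y p).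
Proof.
move=> p1 hX hY; have p1' := ltW p1.
apply: weakly_octahedral_wrt_small => [v|s f fball eps eps01].
  by rewrite psum_normE pnorm2_ge0.
have [A [B [A0 B0 fA fB dual]]] := dual_ball_restrict_norms p1' fball.
have [a [al [be [Aa np]]]] := pnorm2_norming_pair p1 A0 B0 dual.
apply: psum_woh_witness p1' hX hY fball.1 (le_trans A0 Aa) B0 _ fB np eps01.
by move=> x; apply: le_trans (fA x) _; rewrite ler_wpM2r.
Qed.

End psum.

Section woh_summand.
Context {R : realType}.

(* When f = 0 a norming functional of some nonzero vector is needed: this is
   where Hahn-Banach and the nontriviality of the space come in. *)
Lemma exists_norming_majorant {V : normedModType R} {f : V -> R} :
  nontrivial V -> dual_ball (fun v => `|v|) f ->
  exists g, [/\ dual_ball (fun v => `|v|) g, forall v, `|f v| <= `|g v| &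
    forall d, 0 < d -> exists v, `|v| <= 1 /\ 1 - d <= g v].
Proof.
move=> [x1 x1_neq0] [fl fb].
have [A0|A_neq0] := eqVneq (dual_norm f) 0.
  have [g [gball gx1]] := exists_norming_functional x1_neq0.
  have x1p : 0 < `|x1| by rewrite normr_gt0.
  exists g; split => // [v|d d0].
    by apply: le_trans (ler_dual_norm fl fb v) _; rewrite A0 mul0r.
  exists (`|x1|^-1 *: x1); split.
    by rewrite normrZ normfV normr_id mulVf ?gt_eqF.
  by rewrite (linear_functionalZ gball.1) gx1 mulVf ?gt_eqF // lerBlDr lerDl ltW.
have A0 := dual_norm_ge0 fb.
have Ap : 0 < dual_norm f by rewrite lt_neqAle eq_sym A_neq0.
exists (fun v => (dual_norm f)^-1 * f v); split.
- split => [k u v|v]; first by rewrite fl mulrDr mulrCA.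
  by rewrite normrM normfV (ger0_norm A0) ler_pdivrMl // ler_dual_norm.
- move=> v; rewrite normrM normfV (ger0_norm A0) ler_pdivlMl // ler_piMl //.
  exact: dual_norm_le1.
- move=> d d0; have [v [v1 hv]] := dual_norm_approx fl fb (mulr_gt0 Ap d0).
  by exists v; split => //; rewrite ler_pdivlMl // mulrBr mulr1 ltW.
Qed.

Lemma woh_witness_normalize {V : normedModType R} {g : V -> R} {s : seq V} {u : V}
    {eta kap : R} :
  linear_functional g -> `|u| <= 1 -> 0 <= eta -> 0 <= kap -> 0 < 1 - eta - kap ->
  (forall x, span_seq s x -> (1 - eta) * (`|g x| + 1) - kap <= `|x + u|) ->
  exists w : V, `|w| = 1 /\ forall x, span_seq s x ->
    (1 - eta) * (`|g x| + 1) - (2 * kap + eta) <= `|x + w|.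
Proof.
move=> gl u1 eta0 kap0 ek hu.
have u_ge : 1 - eta - kap <= `|u|.
  by have := hu 0 (span_seq0 _); rewrite (linear_functional0 gl) normr0 !add0r mulr1.
have up : 0 < `|u| by apply: lt_le_trans u_ge.
exists (`|u|^-1 *: u); split; first by rewrite normrZ normfV normr_id mulVf ?gt_eqF.
move=> x sx; have := hu x sx.
have -> : x + u = (x + `|u|^-1 *: u) + (1 - `|u|^-1) *: u.
  by rewrite scalerBl scale1r addrACA subrr addr0.
move=> /le_trans/(_ (ler_normD _ _)); rewrite normrZ.
have -> : `|1 - `|u|^-1| * `|u| = 1 - `|u|.
  rewrite ler0_norm; last by rewrite subr_le0 invf_ge1 // (le_trans u1).
  by rewrite opprB mulrBl mulVf ?gt_eqF // mul1r.
lra.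
Qed.

Lemma psum_woh_probe {p} {X Y : normedModType R} {g : X -> R} (s : seq X) {x0 : X}
    {th : R} :
  (1 <= p)%E -> weakly_octahedral_wrt (@psum_norm R X Y p) ->
  dual_ball (fun x => `|x|) g -> `|x0| <= 1 -> 1 - th <= g x0 -> 0 < th <= 1 ->
  exists (u : X) (v : Y), pnorm2 p `|u| `|v| = 1 /\ forall x, span_seq s x ->
    exists y : X, `|y| <= 1 /\
      (1 - th) * (`|g x| + 2 - th) <= pnorm2 p `|y + x + u| `|v|.
Proof.
move=> p1 hS [gl gb] x01 gx0 /andP[th0 th1].
pose F (z : X * Y) := g z.1.
have Fball : dual_ball (@psum_norm R X Y p) F.
  split => [k a b|z]; first by rewrite /F gl.
  by rewrite /F psum_normE; apply: le_trans (gb _) (pnorm2_ge_l p1 _ _).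
have [[u v] [w1 hw]] :=
  hS _ (ex_intro _ (map (fun x : X => ((x, 0) : X * Y)) (x0 :: s)) erefl) F Fball th th0.
exists u, v; split; first by rewrite -w1 psum_normE.
move=> x sx; pose sg : R := if 0 <= g x then 1 else -1.
exists (sg *: x0); split.
  by rewrite normrZ /sg; case: ifP => _; rewrite ?normrN normr1 mul1r.
have := hw _ (span_seq_map linear_pairl (span_seq_cons x0 sg sx)).
rewrite w1 psum_normE /= add0r => h; apply: le_trans h.
rewrite ler_wpM2l ?subr_ge0 //.
rewrite /F /= (linear_functionalD gl) (linear_functionalZ gl) /sg; case: ifP => gx.
  have gxp : 0 <= g x by rewrite gx.
  rewrite mul1r (ger0_norm gxp) ger0_norm; lra.
have gn : g x < 0 by rewrite ltNge gx.
rewrite (ltr0_norm gn) ler0_norm; lra.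
Qed.

Let near_witness_arith {th G K c m tau : R} : 0 <= th ->
  K = (1 - th) * (G + 2 - th) -> K - tau <= c -> c <= 1 + m ->
  (1 - th) * (G + 1) - (2 * th + tau) <= m.
Proof. by move=> th0 -> Kc cm; nra. Qed.

Let final_arith {eps th G x W : R} :
  0 <= th -> th <= eps / 12 -> eps < 1 -> 0 <= G -> x <= G ->
  (1 - th) * (G + 1) - (2 * (2 * th + eps / 4) + th) <= W ->
  (1 - eps) * (x + 1) <= W.
Proof. by move=> *; nra. Qed.

Let small_theta {eps th : R} : 0 < th -> th <= eps / 12 -> eps < 1 ->
  [/\ 0 < th <= 1, 0 <= 2 * th + eps / 4 & 0 < 1 - th - (2 * th + eps / 4)].
Proof. by move=> *; split; [apply/andP; split | |]; lra. Qed.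

Lemma weakly_octahedral_of_psum p {X Y : normedModType R} : (1 < p)%E ->
  nontrivial X -> weakly_octahedral_wrt (@psum_norm R X Y p) -> weakly_octahedral X.
Proof.
move=> p1 ntX hS; apply: weakly_octahedral_wrt_small => [v|s xs xsb eps /andP[e0 e1]].
  exact: normr_ge0.
have [g [gball xs_g g_norming]] := exists_norming_majorant ntX xsb.
have tau0 : 0 < eps / 4 by rewrite divr_gt0.
have [th0 th00 large] := pnorm2_first_large p1 tau0.
set th := Num.min th0 (eps / 12).
have th_pos : 0 < th by rewrite lt_min th00 divr_gt0.
have th_th0 : th <= th0 by rewrite ge_min lexx.
have th_eps : th <= eps / 12 by rewrite ge_min lexx orbT.
have th_range : 0 < th <= th0 by rewrite th_pos th_th0.
have [th01 kap0 ek] := small_theta th_pos th_eps e1.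
have [x0 [x01 gx0]] := g_norming th th_pos.
have [u [v [uv1 probe]]] := psum_woh_probe s (ltW p1) hS gball x01 gx0 th01.
have u1 : `|u| <= 1 by rewrite -uv1 (pnorm2_ge_l (ltW p1)) ?normr_ge0.
have [y0 [y01 hy0]] := probe 0 (span_seq0 _).
rewrite (linear_functional0 gball.1) normr0 add0r addr0 in hy0.
have near_u x : span_seq s x ->
    (1 - th) * (`|g x| + 1) - (2 * th + eps / 4) <= `|x + u|.
  move=> sx; have [y [y1 hy]] := probe x sx.
  have K2 : (1 - th) * (2 - th) <= (1 - th) * (`|g x| + 2 - th).
    by rewrite ler_wpM2l ?subr_ge0 ?lerD2r ?lerDr //; case/andP: th01.
  have y0u : `|y0 + u| <= 1 + `|u| by apply: le_trans (ler_normD _ _) _; rewrite lerD2r.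
  have := large th _ _ _ _ _ th_range (normr_ge0 _) (normr_ge0 _)
    (normr_ge0 _) (normr_ge0 (y + x + u)) uv1 y0u hy0 K2 hy.
  have yxu : `|y + x + u| <= 1 + `|x + u|.
    by rewrite -addrA; apply: le_trans (ler_normD _ _) _; rewrite lerD2r.
  by move/near_witness_arith; apply => //; exact: ltW.
have [w [w1 hw]] := woh_witness_normalize gball.1 u1 (ltW th_pos) kap0 ek near_u.
exists w; split => // x sx; rewrite w1.
exact: final_arith (ltW th_pos) th_eps e1 (normr_ge0 _) (xs_g x) (hw x sx).
Qed.

End woh_summand.

Theorem proposition4p5 (R : realType) (X Y : completeNormedModType R) :
  nontrivial X -> nontrivial Y ->
  [/\ (weakly_octahedral X ->
        weakly_octahedral_wrt (@psum_norm R X Y 1%:E)),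
      (forall p : \bar R, (1%:E < p)%E ->
        weakly_octahedral X -> weakly_octahedral Y ->
        weakly_octahedral_wrt (@psum_norm R X Y p)) &
      (forall p : \bar R, (1%:E < p)%E ->
        weakly_octahedral_wrt (@psum_norm R X Y p) -> weakly_octahedral X)].
Proof.
move=> ntX _; split.
- exact: weakly_octahedral_psum1.
- exact: weakly_octahedral_psum.
- by move=> p p1; apply: weakly_octahedral_of_psum p1 ntX.
Qed.
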